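(* Let $\mathcal{A}$ be a complex Banach algebra with unity and $a,b\in\mathcal{A}$. Then $ab$ is g$\pi$-Hirano invertible if and only if $ba$ is g$\pi$-Hirano invertible.
   Context: $\mathcal{A}^{qnil}$ denotes the set of quasinilpotent elements of $\mathcal{A}$ (spectrum equal to $\{0\}$). An element $a\in\mathcal{A}$ is g$\pi$-Hirano invertible if there exists $x\in\mathcal{A}$ with $xax=x$, $ax=xa$ and $a-a^{n+2}x\in\mathcal{A}^{qnil}$ for some positive integer $n$. *)

From HB Require Import structures.
From mathcomp Require Import all_boot all_order all_algebra.
From mathcomp Require Import complex reals.
Set Implicit Arguments. Unset Strict Implicit. Unset Printing Implicit Defensive.
Import Order.TTheory GRing.Theory Num.Theory.
Local Open Scope ring_scope.

Definition banach_algebra_norm (R : realType) (A : unitAlgType R[i])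
    (nrm : A -> R) : Prop :=
  [/\ (forall x, 0 <= nrm x),
      (forall x, nrm x = 0 -> x = 0),
      (forall x y, nrm (x + y) <= nrm x + nrm y) /\
      (forall (l : R[i]) x, (nrm (l *: x))%:C%C = `|l| * (nrm x)%:C%C),
      (forall x y, nrm (x * y) <= nrm x * nrm y) &
      (forall u : nat -> A,
         (forall e : R, 0 < e -> exists N, forall m n, (N <= m)%N -> (N <= n)%N ->
             nrm (u m - u n) < e) ->
         exists l : A, forall e : R, 0 < e -> exists N, forall n, (N <= n)%N ->
             nrm (u n - l) < e)].

Definition spectrum (R : realType) (A : unitAlgType R[i]) (a : A) : R[i] -> Prop :=
  fun l => ~ ((l%:A - a) \is a GRing.unit).

Definition quasinilpotent (R : realType) (A : unitAlgType R[i]) (a : A) : Prop :=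
  forall l : R[i], spectrum a l <-> l = 0.

Definition gpi_Hirano_invertible (R : realType) (A : unitAlgType R[i]) (a : A) : Prop :=
  exists x : A, [/\ x * a * x = x, a * x = x * a &
    exists n : nat, (0 < n)%N /\ quasinilpotent (a - a ^+ (n + 2) * x)].

(* If x is a gpi-Hirano inverse of ab, then y = b x^2 a is one of ba (Cline's
   formula): with v = (1 - (ab)^(n+2) x^2) a we get ba - (ba)^(n+2) y = b v and
   v b = ab - (ab)^(n+2) x, so it remains to carry quasinilpotency from v b over
   to b v.  Jacobson's lemma gives sigma(bv) \ {0} = sigma(vb) \ {0} = {}, and
   0 lies in sigma(bv) because spectra in a complex normed algebra are nonempty.

   Nonemptiness is proved without Liouville's theorem.  If every 1 - mu w is
   invertible, the sums F(rho) = sum_(k < n) (1 - rho om^k w)^-1 over the powers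
   of an n-th root of unity om hardly depend on rho in [0, r] once om is close
   to 1: by the resolvent identity and the telescoping identity
   sum_k om^k h(rho om^k) w h(rho om^(k+1)) = 0, the variation is controlled by
   a bound for the resolvent on the compact disc of radius r.  But F(0) = n,
   while |F(r)| <= 2 n |w^-1| / r is small for large r. *)

From HB Require Import structures.
From mathcomp Require Import all_boot all_order all_algebra.
From mathcomp Require Import complex reals.
From mathcomp Require Import ring lra.
From mathcomp Require Import classical_sets boolp topology normedtype.
Import Order.TTheory GRing.Theory Num.Theory.
Import numFieldNormedType.Exports.
Import Normc.
Set Implicit Arguments. Unset Strict Implicit. Unset Printing Implicit Defensive.
Local Open Scope ring_scope.

Section ComplexModulus.
Variable R : rcfType.
Implicit Types (z : R[i]) (k : R).

Lemma normr_complex z : `|z| = (normc z)%:C%C.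
Proof. by case: z => a b; rewrite normc_def. Qed.

Lemma normc_ge0 z : 0 <= normc z.
Proof. by case: z => a b; apply: sqrtr_ge0. Qed.

Lemma normc_sqr z : normc z ^+ 2 = complex.Re z ^+ 2 + complex.Im z ^+ 2.
Proof. by case: z => a b; rewrite /= sqr_sqrtr // addr_ge0 ?sqr_ge0. Qed.

Lemma normc_real k : normc k%:C%C = `|k|.
Proof. by rewrite /= expr0n /= addr0 sqrtr_sqr. Qed.

Lemma normcX z n : normc (z ^+ n) = normc z ^+ n.
Proof. by elim: n => [|n IH]; rewrite ?normc1 // !exprS normcM IH. Qed.

Lemma normc_Re z : `|complex.Re z| <= normc z.
Proof.
rewrite -ler_sqr ?nnegrE ?normc_ge0 // real_normK ?num_real //.
by rewrite normc_sqr lerDl sqr_ge0.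
Qed.

Lemma normc_Im z : `|complex.Im z| <= normc z.
Proof.
rewrite -ler_sqr ?nnegrE ?normc_ge0 // real_normK ?num_real //.
by rewrite normc_sqr lerDr sqr_ge0.
Qed.

Lemma normc_cplx_le (a b : R) : normc (a +i* b)%C <= `|a| + `|b|.
Proof.
rewrite -ler_sqr ?nnegrE ?normc_ge0 ?addr_ge0 //.
rewrite normc_sqr /= sqrrD !real_normK ?num_real //.
by rewrite lerD2r lerDl mulrn_wge0 // mulr_ge0.
Qed.

End ComplexModulus.

Definition algebra_norm (R : realType) (A : unitAlgType R[i]) (N : A -> R) : Prop :=
  [/\ forall x, 0 <= N x,
      forall x, N x = 0 -> x = 0,
      forall x y, N (x + y) <= N x + N y,
      forall l x, N (l *: x) = normc l * N x &
      forall x y, N (x * y) <= N x * N y].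

Lemma banach_algebra_normW (R : realType) (A : unitAlgType R[i]) (N : A -> R) :
  banach_algebra_norm N -> algebra_norm N.
Proof.
case=> N_ge0 N_eq0 [ND NZ] NM _; split=> // l x.
by apply: complexI; rewrite rmorphM /= -normr_complex.
Qed.

Section AlgebraNorm.
Variables (R : realType) (A : unitAlgType R[i]) (N : A -> R).
Hypothesis hN : algebra_norm N.

Lemma nrm_ge0 x : 0 <= N x. Proof. by case: hN. Qed.
Lemma nrmD x y : N (x + y) <= N x + N y. Proof. by case: hN. Qed.
Lemma nrmZ l x : N (l *: x) = normc l * N x. Proof. by case: hN. Qed.
Lemma nrmM x y : N (x * y) <= N x * N y. Proof. by case: hN. Qed.

Lemma nrmN x : N (- x) = N x.
Proof. by rewrite -scaleN1r nrmZ normcN normc1 mul1r. Qed.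

Lemma nrm0 : N 0 = 0.
Proof. by rewrite -(scale0r (0 : A)) nrmZ normc0 mul0r. Qed.

Lemma nrmB x y : N (x - y) <= N x + N y.
Proof. by rewrite -(nrmN y) nrmD. Qed.

Lemma nrmMn x n : N (x *+ n) = n%:R * N x.
Proof. by rewrite -scaler_nat nrmZ -(rmorph_nat (real_complex R)) normc_real normr_nat. Qed.

Lemma nrm_sum (I : Type) (r : seq I) (P : pred I) (F : I -> A) :
  N (\sum_(i <- r | P i) F i) <= \sum_(i <- r | P i) N (F i).
Proof.
elim/big_rec2: _ => [|i y1 y2 _ h]; first by rewrite nrm0.
by apply: le_trans (nrmD _ _) _; rewrite lerD2l.
Qed.

Lemma nrm1_gt0 : 0 < N 1.
Proof.
rewrite lt_def nrm_ge0 andbT; apply/eqP.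
by case: hN => _ N_eq0 _ _ _ /N_eq0/eqP; rewrite oner_eq0.
Qed.

Lemma ler_dist_nrm x y : `|N x - N y| <= N (x - y).
Proof.
have le_xy : N x <= N (x - y) + N y by rewrite -{1}(subrK y x) nrmD.
have le_yx : N y <= N (x - y) + N x by rewrite -(nrmN (x - y)) opprB -{1}(subrK x y) nrmD.
by rewrite ler_norml; apply/andP; split; lra.
Qed.

End AlgebraNorm.

Lemma nrm_inv1B_far (R : realType) (A : unitAlgType R[i]) (N : A -> R) (w : A) (mu : R[i]) :
  algebra_norm N -> w \is a GRing.unit -> (1 - mu *: w) \is a GRing.unit ->
  2 * N w^-1 <= normc mu -> normc mu * N (1 - mu *: w)^-1 <= 2 * N w^-1.
Proof.
move=> hN wU U far; set z := (1 - mu *: w)^-1.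
have muz : mu *: z = w^-1 * z - w^-1.
  have := congr1 (fun t => w^-1 * t) (mulrV U); rewrite -/z mulr1 mulrA mulrBr mulr1.
  rewrite -scalerAr mulVr // mulrBl -scalerAl !mul1r => E.
  by rewrite -[X in _ - X]E opprB addrC subrK.
have : normc mu * N z <= N w^-1 * N z + N w^-1.
  by rewrite -nrmZ // muz; apply: le_trans (nrmB hN _ _) _; rewrite lerD2r nrmM.
have := nrm_ge0 hN z; have := nrm_ge0 hN w^-1; nra.
Qed.

Lemma continuous_bounded_square (R : realType) (g : R * R -> R) (r : R) :
  continuous g -> exists M, forall p, `|p.1| <= r -> `|p.2| <= r -> g p <= M.
Proof.
move=> gc; have sq_compact : compact (`[-r, r] `*` `[-r, r])%classic.
  by apply: compact_setX; apply: segment_compact.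
have [M [_ HM]] := compact_bounded (continuous_compact (continuous_subspaceT gc) sq_compact).
exists (M + 1) => p p1 p2; apply: le_trans (ler_norm _) _.
apply: HM; rewrite ?ltrDl //; exists p => //.
by split; rewrite /= in_itv /= -ler_norml.
Qed.

Section Resolvent.
Variables (R : realType) (A : unitAlgType R[i]) (N : A -> R) (w : A).
Hypothesis hN : algebra_norm N.
Hypothesis resolvent_unit : forall mu : R[i], (1 - mu *: w) \is a GRing.unit.

(* The resolvent of [w] at [mu^-1], up to a factor [mu^-1]; this normalisation is defined
   and equal to [1] at [mu = 0]. *)
Definition resolvent (mu : R[i]) : A := (1 - mu *: w)^-1.
Local Notation h := resolvent.

Lemma resolvent0 : h 0 = 1.
Proof. by rewrite /h scale0r subr0 invr1. Qed.

Lemma resolventB a b : h a - h b = (a - b) *: (h a * w * h b).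
Proof.
have -> : h a - h b = h a * ((1 - b *: w) - (1 - a *: w)) * h b.
  by rewrite mulrBr mulrBl mulVr // -mulrA mulrV // mulr1 mul1r.
by rewrite opprB [_ + (_ - 1)]addrC addrA subrK -scalerBl -scalerAr !scalerAl.
Qed.

Lemma resolvent_near a b : normc (b - a) * (N w * N (h a)) <= 2^-1 ->
  N (h b - h a) <= normc (b - a) * (2 * N w * N (h a) ^+ 2).
Proof.
move=> small; set r := normc (b - a).
have r0 : 0 <= r := normc_ge0 _.
have hb0 := nrm_ge0 hN (h b); have ha0 := nrm_ge0 hN (h a); have w0 := nrm_ge0 hN w.
have diff : N (h b - h a) <= r * (N w * N (h a)) * N (h b).
  rewrite resolventB nrmZ //; apply: le_trans (ler_wpM2l r0 (nrmM hN _ _)) _.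
  rewrite [X in _ <= X](_ : _ = r * (N (h b) * N w * N (h a))); last by ring.
  by apply: ler_wpM2l => //; apply: ler_wpM2r => //; apply: nrmM.
have hb : N (h b) <= 2 * N (h a).
  have : N (h b) <= N (h a) + N (h b - h a) by rewrite -{1}(subrK (h a) (h b)) addrC nrmD.
  have : r * (N w * N (h a)) * N (h b) <= 2^-1 * N (h b) by rewrite ler_wpM2r.
  lra.
apply: le_trans diff _; rewrite [X in _ <= X](_ : _ = r * (N w * N (h a)) * (2 * N (h a))).
  by rewrite ler_wpM2l ?mulr_ge0.
by ring.
Qed.

Lemma resolvent_continuous_at a e : 0 < e ->
  exists2 d, 0 < d & forall b, normc (b - a) < d -> N (h b - h a) < e.
Proof.
move=> e0; set c := N w * N (h a); set L := 2 * N w * N (h a) ^+ 2.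
have c0 : 0 <= c by rewrite mulr_ge0 ?nrm_ge0.
have L0 : 0 <= L by rewrite !mulr_ge0 ?nrm_ge0.
have c1 : 0 < c + 1 by lra.
have L1 : 0 < L + 1 by lra.
exists (Num.min (2^-1 / (c + 1)) (e / (L + 1))) => [|b].
  by rewrite lt_min; apply/andP; split; apply: divr_gt0; rewrite ?invr_gt0.
rewrite lt_min => /andP [rc rL].
have r0 := normc_ge0 (b - a).
apply: le_lt_trans (resolvent_near _) _.
  apply: le_trans (_ : normc (b - a) * (c + 1) <= 2^-1); first by rewrite ler_wpM2l // lerDl.
  by rewrite -ler_pdivlMr // ltW.
apply: le_lt_trans (_ : normc (b - a) * (L + 1) < e); first by rewrite ler_wpM2l // lerDl.
by rewrite -ltr_pdivlMr.
Qed.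

Lemma resolvent_nrm_continuous : continuous (fun p : R * R => N (h (p.1 +i* p.2)%C)).
Proof.
move=> [s t]; apply/cvgrPdist_lt => e e0.
have [d d0 near_d] := resolvent_continuous_at (s +i* t)%C e0.
have d20 : 0 < d / 2 by rewrite divr_gt0.
exists (ball s (d / 2), ball t (d / 2)); first by split; apply: nbhsx_ballx.
case=> s' t' [/= ss' tt']; rewrite -ball_normE /= in ss' tt'.
apply: le_lt_trans (ler_dist_nrm hN _ _) _; rewrite -(nrmN hN) opprB.
apply: near_d; apply: le_lt_trans (normc_cplx_le _ _) _.
by rewrite -[s' - s]opprB -[t' - t]opprB !normrN; lra.
Qed.

Lemma resolvent_bounded r : exists M, forall mu, normc mu <= r -> N (h mu) <= M.
Proof.
have [M HM] := continuous_bounded_square r resolvent_nrm_continuous.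
exists M => -[s t] le_r; apply: (HM (s, t)).
  exact: le_trans (normc_Re (s +i* t)%C) le_r.
exact: le_trans (normc_Im (s +i* t)%C) le_r.
Qed.

End Resolvent.

Lemma normc_unity_root (R : rcfType) (z : R[i]) n :
  (0 < n)%N -> z ^+ n = 1 -> normc z = 1.
Proof.
move=> n0 zn; apply/eqP; rewrite -(pexpr_eq1 n0 (normc_ge0 z)) -normcX zn.
by rewrite normc1.
Qed.

Section DyadicRoots.
Variable R : rcfType.

Definition dyadic_root (j : nat) : R[i] := iter j (@sqrtc R) (-1).

Lemma dyadic_rootX j : dyadic_root j ^+ (2 ^ j.+1) = 1.
Proof.
elim: j => [|j IH]; first by rewrite /dyadic_root /= expr2 mulrNN mulr1.
by rewrite /dyadic_root iterS -/(dyadic_root j) expnS exprM sqr_sqrtc IH.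
Qed.

Lemma dyadic_root_neq1 j : dyadic_root j != 1.
Proof.
elim: j => [|j IH].
  by rewrite /dyadic_root /= eq_sym -subr_eq0 opprK -[1 + 1]/(2%:R) pnatr_eq0.
apply: contra IH; rewrite /dyadic_root iterS -/(dyadic_root j) => /eqP s1.
by rewrite -[dyadic_root j]sqr_sqrtc s1 expr1n.
Qed.

Lemma normc_1B_dyadic_root j : normc (1 - dyadic_root j) ^+ 2 <= 4 / (2 ^ j)%:R.
Proof.
elim: j => [|j IH]; first by rewrite normc_sqr /= expn0 divr1; lra.
rewrite /dyadic_root iterS -/(dyadic_root j).
set z := dyadic_root j in IH *; set s := sqrtc z.
have s1 : normc s = 1.
  apply: (@normc_unity_root _ _ (2 ^ j.+2)); first by rewrite expn_gt0.
  by rewrite expnS exprM sqr_sqrtc dyadic_rootX.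
have Re_s : 0 <= complex.Re s by rewrite /s; case: (z) => a b; apply: sqrtr_ge0.
have large_1Ds : 2 <= normc (1 + s) ^+ 2.
  move: (normc_sqr s) Re_s; rewrite s1 normc_sqr; case: (s) => a b /=; nra.
have z_fact : 1 - z = (1 - s) * (1 + s) by rewrite -(sqr_sqrtc z) -/s; ring.
have p2 : 0 < ((2 ^ j)%:R : R) by rewrite ltr0n expn_gt0.
move: IH; rewrite z_fact normcM exprMn expnS natrM !ler_pdivlMr ?mulr_gt0 //.
have := sqr_ge0 (normc (1 - s)); nra.
Qed.

End DyadicRoots.

Lemma root_of_unity_near1 (R : realType) (e : R) : 0 < e ->
  exists n (om : R[i]), [/\ (0 < n)%N, om ^+ n = 1, om != 1 & normc (1 - om) <= e].
Proof.
move=> e0; set j := (Num.truncn (4 / e ^+ 2)).+1.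
exists (2 ^ j.+1)%N, (dyadic_root R j); split; rewrite ?expn_gt0 ?dyadic_rootX ?dyadic_root_neq1 //.
have j_gt : 4 / e ^+ 2 < j%:R by apply: truncnS_gt.
have j_le : (j%:R : R) <= (2 ^ j)%:R by rewrite ler_nat ltnW // ltn_expl.
have e2 : 0 < e ^+ 2 by rewrite exprn_gt0.
have p2 : 0 < ((2 ^ j)%:R : R) by rewrite ltr0n expn_gt0.
have sq_le : normc (1 - dyadic_root R j) ^+ 2 <= e ^+ 2.
  apply: le_trans (normc_1B_dyadic_root R j) _.
  by rewrite ler_pdivrMr //; move: j_gt; rewrite ltr_pdivrMr // => ?; nra.
by rewrite -ler_sqr ?nnegrE ?normc_ge0 ?(ltW e0).
Qed.

Section CircleSum.
Variables (R : realType) (A : unitAlgType R[i]) (N : A -> R) (w : A).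
Hypothesis hN : algebra_norm N.
Hypothesis resolvent_unit : forall mu : R[i], (1 - mu *: w) \is a GRing.unit.
Variables (r M : R).
Hypothesis M_ge0 : 0 <= M.
Hypothesis resolvent_le : forall mu, normc mu <= r -> N (resolvent w mu) <= M.
Variables (n : nat) (om : R[i]).
Hypotheses (n_gt0 : (0 < n)%N) (omn : om ^+ n = 1) (om_neq1 : om != 1).

Local Notation h := (resolvent w).
Local Notation K := (M ^+ 3 * N w ^+ 2).

Definition circle_sum (rho : R) : A := \sum_(0 <= k < n) h (rho%:C%C * om ^+ k).

Lemma normc_rootX k : normc (om ^+ k) = 1.
Proof. by rewrite normcX (normc_unity_root n_gt0 omn) expr1n. Qed.

Lemma normc_circle (rho : R) k : 0 <= rho -> normc (rho%:C%C * om ^+ k) = rho.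
Proof. by move=> rho0; rewrite normcM normc_rootX mulr1 normc_real ger0_norm. Qed.

Lemma nrm_resolvent_w_resolventB a b c : normc a <= r -> normc b <= r -> normc c <= r ->
  N (h a * w * (h b - h c)) <= normc (b - c) * K.
Proof.
move=> ar br cr; have w0 := nrm_ge0 hN w.
have hw_le : N (h a * w) <= M * N w.
  by apply: le_trans (nrmM hN _ _) _; rewrite ler_wpM2r ?resolvent_le.
have hwh_le : N (h b * w * h c) <= M * N w * M.
  apply: le_trans (nrmM hN _ _) _; apply: ler_pM; rewrite ?nrm_ge0 ?resolvent_le //.
  by apply: le_trans (nrmM hN _ _) _; rewrite ler_wpM2r ?resolvent_le.
rewrite resolventB // -scalerAr nrmZ // ler_wpM2l ?normc_ge0 //.
rewrite [X in _ <= X](_ : _ = M * N w * (M * N w * M)); last by ring.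
by apply: le_trans (nrmM hN _ _) _; apply: ler_pM; rewrite ?nrm_ge0.
Qed.

Lemma twisted_circle_sum_eq0 (rho : R) : rho != 0 ->
  \sum_(0 <= k < n) om ^+ k *: (h (rho%:C%C * om ^+ k) * w * h (rho%:C%C * om ^+ k.+1)) = 0.
Proof.
move=> rho0; set c := rho%:C%C * (om - 1).
have c0 : c != 0 by rewrite mulf_neq0 ?fmorph_eq0 // subr_eq0.
apply: (@scalerI _ _ c c0); rewrite scaler0 scaler_sumr.
rewrite (eq_bigr (fun k => h (rho%:C%C * om ^+ k.+1) - h (rho%:C%C * om ^+ k))) => [|k _].
  by rewrite telescope_sumr // omn expr0 subrr.
by rewrite -opprB resolventB // -scaleNr scalerA /c exprS; congr (_ *: _); ring.
Qed.

Lemma circle_sumB (rho rho' : R) : 0 < rho -> rho <= r -> 0 <= rho' -> rho' <= r ->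
  N (circle_sum rho - circle_sum rho') <=
    n%:R * (`|rho - rho'| * (K * (`|rho - rho'| + rho * normc (1 - om)))).
Proof.
move=> rho0 rho_le rho'0 rho'_le; set d := rho - rho'.
pose a k := rho%:C%C * om ^+ k; pose b k := rho'%:C%C * om ^+ k.
have -> : circle_sum rho - circle_sum rho' =
    d%:C%C *: \sum_(0 <= k < n) om ^+ k *: (h (a k) * w * (h (b k) - h (a k.+1))).
  have -> : circle_sum rho - circle_sum rho' = circle_sum rho - circle_sum rho' -
      d%:C%C *: \sum_(0 <= k < n) om ^+ k *: (h (a k) * w * h (a k.+1)).
    by rewrite twisted_circle_sum_eq0 ?lt0r_neq0 // scaler0 subr0.
  rewrite /circle_sum -sumrB !scaler_sumr -sumrB; apply: eq_bigr => k _.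
  rewrite mulrBr !scalerBr !scalerA resolventB //; congr (_ *: _ - _).
  by rewrite /a /b /d rmorphB /=; ring.
rewrite nrmZ // normc_real mulrCA ler_wpM2l //.
apply: le_trans (nrm_sum hN _ _ _) _.
have term_le k : N (om ^+ k *: (h (a k) * w * (h (b k) - h (a k.+1)))) <=
    K * (`|d| + rho * normc (1 - om)).
  rewrite nrmZ // normc_rootX mul1r mulrC.
  apply: le_trans (nrm_resolvent_w_resolventB _ _ _) _; rewrite ?normc_circle ?(ltW rho0) //.
  rewrite ler_wpM2r ?mulr_ge0 ?exprn_ge0 ?nrm_ge0 //.
  have -> : b k - a k.+1 = om ^+ k * ((rho' - rho)%:C%C + rho%:C%C * (1 - om)).
    by rewrite /a /b exprS rmorphB /=; ring.
  rewrite normcM normc_rootX mul1r; apply: le_trans (le_normcD _ _) _.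
  by rewrite normcM !normc_real distrC (ger0_norm (ltW rho0)).
apply: le_trans (ler_sum_nat (fun k _ => term_le k)) _.
by rewrite sumr_const_nat subn0 mulr_natl.
Qed.

Lemma circle_sum_drift m : (0 < m)%N -> 0 < r ->
  N (circle_sum r - circle_sum 0) <= n%:R * (r ^+ 2 * K * (m%:R^-1 + normc (1 - om))).
Proof.
move=> m0 r0; have mR : 0 < (m%:R : R) by rewrite ltr0n.
pose t j := r * j%:R / m%:R.
have t_le j : (j <= m)%N -> t j <= r by move=> jm; rewrite /t ler_pdivrMr // ler_pM2l // ler_nat.
have t_ge0 j : 0 <= t j by rewrite /t !mulr_ge0 ?invr_ge0 // ltW.
have -> : circle_sum r - circle_sum 0 = \sum_(0 <= j < m) (circle_sum (t j.+1) - circle_sum (t j)).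
  by rewrite telescope_sumr // /t mulr0 mul0r mulfK // lt0r_neq0.
apply: le_trans (nrm_sum hN _ _ _) _.
set B := n%:R * _.
have step_le j : (0 <= j < m)%N -> N (circle_sum (t j.+1) - circle_sum (t j)) <= B / m%:R.
  case/andP=> _ jm.
  have tS : t j.+1 - t j = r / m%:R by rewrite /t -mulrBl -mulrBr -natrB // subSnn mulr1.
  have tS_gt0 : 0 < t j.+1 by rewrite /t !mulr_gt0 ?invr_gt0 ?ltr0n.
  apply: le_trans (circle_sumB tS_gt0 (t_le _ jm) (t_ge0 _) (t_le _ (ltnW jm))) _.
  rewrite tS ger0_norm ?divr_ge0 ?(ltW r0) ?(ltW mR) //.
  apply: le_trans (_ : _ <= n%:R * (r / m%:R * (K * (r / m%:R + r * normc (1 - om))))) _.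
    rewrite ler_wpM2l // ler_wpM2l ?divr_ge0 ?(ltW r0) ?(ltW mR) //.
    rewrite ler_wpM2l ?mulr_ge0 ?exprn_ge0 ?nrm_ge0 //.
    by rewrite lerD2l ler_wpM2r ?normc_ge0 ?t_le.
  by rewrite /B le_eqVlt; apply/orP; left; apply/eqP; field; rewrite lt0r_neq0.
apply: le_trans (ler_sum_nat step_le) _.
by rewrite sumr_const_nat subn0 -[_ *+ m]mulr_natr divfK // lt0r_neq0.
Qed.

End CircleSum.

Lemma circle_sum_drift_small (R : realType) (A : unitAlgType R[i]) (N : A -> R) (w : A)
    (r M eps : R) :
  algebra_norm N -> (forall mu : R[i], (1 - mu *: w) \is a GRing.unit) -> 0 <= M ->
  (forall mu, normc mu <= r -> N (resolvent w mu) <= M) -> 0 < r -> 0 < eps ->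
  exists n (om : R[i]), [/\ (0 < n)%N, om ^+ n = 1, om != 1 &
    N (circle_sum w n om r - circle_sum w n om 0) <= n%:R * eps].
Proof.
move=> hN resolvent_unit M0 HM r0 eps0.
set K := M ^+ 3 * N w ^+ 2.
have rK0 : 0 <= r ^+ 2 * K by rewrite !mulr_ge0 ?exprn_ge0 ?nrm_ge0 ?(ltW r0).
set e := eps / (2 * (r ^+ 2 * K + 1)).
have e0 : 0 < e by apply: divr_gt0 => //; lra.
have [n [om [n0 omn om1 om_near]]] := root_of_unity_near1 e0.
exists n, om; split => //.
set m := (Num.truncn e^-1).+1.
have m_near : m%:R^-1 <= e.
  by rewrite -[e]invrK lef_pV2 ?posrE ?invr_gt0 ?ltr0n // ltW // truncnS_gt.
apply: le_trans (circle_sum_drift hN resolvent_unit M0 HM n0 omn om1 (ltn0Sn _ : (0 < m)%N) r0) _.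
rewrite ler_wpM2l ?ler0n // -/K.
have e_eps : 2 * e * (r ^+ 2 * K + 1) = eps by rewrite /e; field; lra.
have : m%:R^-1 + normc (1 - om) <= 2 * e by lra.
move=> /(ler_wpM2l rK0); nra.
Qed.

Theorem spectrum_nonempty (R : realType) (A : unitAlgType R[i]) (N : A -> R) (w : A) :
  algebra_norm N -> exists l, spectrum w l.
Proof.
move=> hN; apply/existsNP => hw.
have resolvent_unit mu : (1 - mu *: w) \is a GRing.unit.
  have [->|mu0] := eqVneq mu 0; first by rewrite scale0r subr0 unitr1.
  have -> : 1 - mu *: w = mu *: (mu^-1%:A - w) by rewrite scalerBr scalerA mulfV // scale1r.
  by rewrite scaler_unit ?unitfE.
have wU : w \is a GRing.unit by rewrite -unitrN -[- w]add0r -(scale0r 1) hw.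
set y := N w^-1; set c := N 1; have c0 : 0 < c := nrm1_gt0 hN.
have y0 : 0 <= y := nrm_ge0 hN _.
set r := 2 * y + 8 * y / c + 1.
have q0 : 0 <= 8 * y / c by apply: divr_ge0; rewrite ?mulr_ge0 ?(ltW c0).
have r0 : 0 < r by rewrite /r; lra.
have r_ge : 2 * y <= r by rewrite /r; lra.
have [M HM] := resolvent_bounded hN resolvent_unit r.
have M0 : 0 <= M by apply: le_trans (nrm_ge0 hN _) (HM 0 _); rewrite normc0 ltW.
have c4_gt0 : 0 < c / 4 by apply: divr_gt0.
have [n [om [n0 omn om1 drift]]] := circle_sum_drift_small hN resolvent_unit M0 HM r0 c4_gt0.
have nrm_sum0 : N (circle_sum w n om 0) = n%:R * c.
  rewrite /circle_sum (eq_bigr (fun _ => 1)) => [|k _]; last by rewrite rmorph0 mul0r resolvent0.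
  by rewrite sumr_const_nat subn0 nrmMn.
have sum_r : N (circle_sum w n om r) <= n%:R * (2 * y / r).
  apply: le_trans (nrm_sum hN _ _ _) _.
  have term_le k : N (resolvent w (r%:C%C * om ^+ k)) <= 2 * y / r.
    rewrite ler_pdivlMr // mulrC -{1}(normc_circle n0 omn k (ltW r0)).
    by apply: nrm_inv1B_far => //; rewrite (normc_circle n0 omn k (ltW r0)).
  apply: le_trans (ler_sum_nat (fun k _ => term_le k)) _.
  by rewrite sumr_const_nat subn0 -[_ *+ n]mulr_natl.
have far_le : 2 * y / r <= c / 4.
  have rc : r * c = 2 * y * c + 8 * y + c by rewrite /r; field; rewrite lt0r_neq0.
  by rewrite ler_pdivrMr //; nra.
have := ler_dist_nrm hN (circle_sum w n om r) (circle_sum w n om 0).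
rewrite nrm_sum0 => /ler_normlP [tri _].
have nR : 0 < (n%:R : R) by rewrite ltr0n.
have := ler_wpM2l (ltW nR) far_le; nra.
Qed.

Lemma unit_algB_mulC (F : fieldType) (A : unitAlgType F) (l : F) (u v : A) :
  l != 0 -> (l%:A - u * v \is a GRing.unit) = (l%:A - v * u \is a GRing.unit).
Proof.
have half (p q : A) : l != 0 -> l%:A - p * q \is a GRing.unit -> l%:A - q * p \is a GRing.unit.
  move=> l0 U; set t := (l%:A - p * q)^-1.
  have shiftr : (l%:A - q * p) * q = q * (l%:A - p * q).
    by rewrite mulrBl mulrBr mulr_algl mulr_algr !mulrA.
  have shiftl : p * (l%:A - q * p) = (l%:A - p * q) * p.
    by rewrite mulrBl mulrBr mulr_algl mulr_algr !mulrA.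
  have left_inv : q * t * p * (l%:A - q * p) = q * p.
    by rewrite -mulrA shiftl mulrA -(mulrA q) mulVr // mulr1.
  have right_inv : (l%:A - q * p) * (q * t * p) = q * p.
    by rewrite !mulrA shiftr -(mulrA q) mulrV // mulr1.
  have alg_inv : l^-1 *: (l%:A : A) = 1 by rewrite scalerA mulVf // scale1r.
  apply/unitrP; exists (l^-1 *: (1 + q * t * p)); split.
    by rewrite -scalerAl mulrDl mul1r left_inv subrK alg_inv.
  by rewrite -scalerAr mulrDr mulr1 right_inv subrK alg_inv.
by move=> l0; apply/idP/idP; apply: half.
Qed.

Lemma mulr_expr_swap (T : pzRingType) (a b : T) k : (b * a) ^+ k * b = b * (a * b) ^+ k.
Proof. by elim: k => [|k IH]; rewrite ?mul1r ?mulr1 // !exprS -mulrA IH !mulrA. Qed.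

Lemma quasinilpotentC (R : realType) (A : unitAlgType R[i]) (N : A -> R) (u v : A) :
  algebra_norm N -> quasinilpotent (v * u) -> quasinilpotent (u * v).
Proof.
move=> hN qn_vu.
have spec_le0 l : spectrum (u * v) l -> l = 0.
  move=> spec_l; have [//|l0] := eqVneq l 0.
  by apply/(qn_vu l) => U; apply: spec_l; rewrite unit_algB_mulC.
move=> l; split; first exact: spec_le0.
have [l0 spec_l0] := spectrum_nonempty (u * v) hN.
by move=> ->; rewrite -(spec_le0 _ spec_l0).
Qed.

Section GpiSwap.
Variables (T : pzRingType) (a b x : T).
Hypotheses (xcx : x * (a * b) * x = x) (cx : a * b * x = x * (a * b)).

Let xxc : x * x * (a * b) = x. Proof. by rewrite -mulrA -cx mulrA. Qed.
Let cxx : a * b * x * x = x. Proof. by rewrite cx. Qed.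

Lemma gpi_inverse_swap :
  let y := b * x ^+ 2 * a in y * (b * a) * y = y /\ b * a * y = y * (b * a).
Proof.
rewrite /= expr2; split.
  have -> : b * (x * x) * a * (b * a) * (b * (x * x) * a) =
      b * (x * x * (a * b) * (a * b * x * x)) * a by rewrite !mulrA.
  by rewrite xxc cxx.
have -> : b * a * (b * (x * x) * a) = b * (a * b * x * x) * a by rewrite !mulrA.
have -> : b * (x * x) * a * (b * a) = b * (x * x * (a * b)) * a by rewrite !mulrA.
by rewrite xxc cxx.
Qed.

Lemma gpi_remainder_swap n : let v := (1 - (a * b) ^+ n * x ^+ 2) * a in
  b * a - (b * a) ^+ n * (b * x ^+ 2 * a) = b * v /\ v * b = a * b - (a * b) ^+ n * x.
Proof.
split; last by rewrite -mulrA mulrBl mul1r -mulrA expr2 xxc.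
by rewrite !mulrA mulr_expr_swap -!mulrA -mulrBr mulrBl mul1r !mulrA.
Qed.

End GpiSwap.

Lemma gpi_Hirano_invertible_swap (R : realType) (A : unitAlgType R[i]) (N : A -> R) (a b : A) :
  algebra_norm N -> gpi_Hirano_invertible (a * b) -> gpi_Hirano_invertible (b * a).
Proof.
move=> hN [x [xcx cx [n [n_gt0 qn]]]].
have [yy yd] := gpi_inverse_swap xcx cx.
have [defect vb] := gpi_remainder_swap xcx cx (n + 2).
exists (b * x ^+ 2 * a); split => //; exists n; split => //.
by rewrite defect; apply: (quasinilpotentC hN); rewrite vb.
Qed.

Theorem lemma4p4 (R : realType) (A : unitAlgType R[i]) (nrm : A -> R)
    (hA : banach_algebra_norm nrm) (a b : A) :
  gpi_Hirano_invertible (a * b) <-> gpi_Hirano_invertible (b * a).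
Proof. by split; apply: gpi_Hirano_invertible_swap (banach_algebra_normW hA). Qed.
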